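(* Let $q>7$ be a prime and $a$ a positive integer. Then $$\nu_q\Big(\prod_{p\le a}(p-1)\Big)\le \frac{0.23\,a}{q-1}+\frac{7\log a}{\log q},$$ where the product is over primes $p\le a$.
   Context: For a prime $q$ and nonzero integer $n$, $\nu_q(n)$ denotes the exponent of $q$ in the prime factorisation of $n$. The letter $p$ denotes primes. *)

From mathcomp Require Import all_boot.
From Stdlib Require Import Reals.

Definition prod_pm1 (a : nat) : nat :=
  \prod_(0 <= p < a.+1 | prime p) (p - 1).

From mathcomp Require Import all_boot zify.

(* Write nu_q(prod (p - 1)) as the sum over k >= 1 of #{p <= a prime : q^k | p - 1};
   only k <= log_q a contribute.  A prime p = 1 + Q m with Q = q^k > 7 has
   m <= (a - 1)/Q and 1 + Q m coprime to 210.  As Q is a unit mod 210, among any 210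
   consecutive m at most phi(210) = 48 values make 1 + Q m coprime to 210, and a
   finite check over the units mod 210 shows that an initial segment of length M
   contains at most (48 M + 630)/210 of them.  Summing the geometric series
   a/q + a/q^2 + ... <= a/(q - 1) gives
   210 (q - 1) nu <= 48 a + 630 (q - 1) floor(log_q a),
   and 48/210 < 0.23, 3 < 7. *)

Lemma coprime_1M_modl u m d : coprime (1 + u %% d * m) d = coprime (1 + u * m) d.
Proof. by rewrite -coprime_modl -modnDmr modnMml modnDmr coprime_modl. Qed.

Lemma coprime_1M_periodic u m d : coprime (1 + u * (d + m)) d = coprime (1 + u * m) d.
Proof. by rewrite -coprime_modl mulnDr addnCA -modnDml modnMl add0n coprime_modl. Qed.

Lemma count_iota_periodic (P : pred nat) d n k r :
  (forall m, P (d + m) = P m) ->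
  count P (iota n (d * k + r)) = k * count P (iota n d) + count P (iota n r).
Proof.
move=> Pd; elim: k n => [|k IHk] n; first by rewrite muln0.
have shift l : count P (iota (n + d) l) = count P (iota n l).
  by rewrite addnC iotaDl count_map; apply: eq_count => m /=; rewrite Pd.
by rewrite mulnS -addnA iotaD count_cat shift IHk mulSn addnA.
Qed.

(* The residues (1 + u m) mod 210 are generated by repeated addition of u, so that
   the computation below never multiplies large unary numbers. *)
Definition wheel_step (u x : nat) : nat := (x + u) %% 210.

Lemma traject_wheel_step u m0 n :
  traject (wheel_step u) ((1 + u * m0) %% 210) n = [seq (1 + u * m) %% 210 | m <- iota m0 n].
Proof.
elim: n m0 => [|n IHn] m0 //=; congr (_ :: _).
by rewrite -IHn /wheel_step modnDml -addnA [u * _ + u]addnC -mulnS.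
Qed.

Definition wheel_bounds_hold (ts : seq nat) (u : nat) : bool :=
  let s := [seq coprime x 210 | x <- traject (wheel_step u) ((1 + u) %% 210) 210] in
  (count idfun s <= 48) && all (fun r => count idfun (take r s) <= nth 0 ts r) (iota 0 210).

(* The thresholds [ts] are let-bound so that they are computed once, not once per u. *)
Lemma wheel_bounds_check :
  let ts := [seq (48 * r + 630) %/ 210 | r <- iota 0 210] in
  all (fun u => coprime u 210 ==> wheel_bounds_hold ts u) (iota 0 210).
Proof. by vm_compute. Qed.

Lemma wheel_count_bounds u : coprime u 210 ->
  count (fun m => coprime (1 + u * m) 210) (iota 1 210) <= 48 /\
  forall r, r < 210 ->
    210 * count (fun m => coprime (1 + u * m) 210) (iota 1 r) <= 48 * r + 630.
Proof.
move=> cop_u; set v := u %% 210.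
have v_in : v \in iota 0 210 by rewrite mem_iota ltn_mod.
have cop_v : coprime v 210 by rewrite coprime_modl.
have /andP[full prefix] := implyP (allP wheel_bounds_check v v_in) cop_v.
set s := [seq coprime x 210 | x <- _] in full prefix.
have countE r : r <= 210 ->
    count (fun m => coprime (1 + u * m) 210) (iota 1 r) = count idfun (take r s).
  move=> r_le; have := traject_wheel_step v 1 210; rewrite muln1 /s => ->.
  rewrite -map_comp -map_take take_iota (minn_idPl r_le) count_map.
  by apply: eq_count => m /=; rewrite coprime_modl coprime_1M_modl.
split; first by rewrite countE // take_oversize // size_map size_traject.
move=> r r_lt; rewrite countE ?(ltnW r_lt) // [210 * _]mulnC -leq_divRL //.
have r_in : r \in iota 0 210 by rewrite mem_iota.
by have := allP prefix r r_in; rewrite (nth_map 0) ?size_iota // nth_iota.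
Qed.

Lemma count_coprime_wheel_le u M : coprime u 210 ->
  210 * count (fun m => coprime (1 + u * m) 210) (iota 1 M) <= 48 * M + 630.
Proof.
move=> /wheel_count_bounds[full prefix].
rewrite (divn_eq M 210) [_ * 210]mulnC count_iota_periodic; last first.
  by move=> m; apply: coprime_1M_periodic.
have := prefix _ (ltn_pmod M (isT : 0 < 210)).
have := leq_mul (leqnn (210 * (M %/ 210))) full.
lia.
Qed.

Lemma coprime210_prime_gt7 p : prime p -> 7 < p -> coprime p 210.
Proof.
move=> p_pr p_gt7; rewrite prime_coprime //; apply/negP => p_dvd.
have small_primes : all (leq^~ 7) (primes 210) by [].
have := allP small_primes p; rewrite mem_primes p_pr p_dvd => /(_ isT).
by rewrite leqNgt p_gt7.
Qed.

Lemma count_primes_1_mod_le Q a : 7 < Q ->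
  count (fun p => prime p && (Q %| p - 1)) (iota 0 a.+1)
  <= count (fun m => coprime (1 + Q * m) 210) (iota 1 ((a - 1) %/ Q)).
Proof.
move=> Q_gt7.
have pE p : prime p -> Q %| p - 1 -> 1 + Q * ((p - 1) %/ Q) = p.
  by move=> p_pr dvd; rewrite mulnC divnK // add1n subn1 prednK ?prime_gt0.
rewrite -!size_filter -(size_map (fun p => (p - 1) %/ Q)).
apply: uniq_leq_size.
  rewrite map_inj_in_uniq ?filter_uniq ?iota_uniq // => p p'.
  rewrite !mem_filter => /andP[/andP[p_pr dvd] _] /andP[/andP[p'_pr dvd'] _] eq_div.
  by rewrite -(pE p) // -(pE p') // eq_div.
move=> m /mapP[p]; rewrite mem_filter mem_iota => /andP[/andP[p_pr dvd] /andP[_ p_le]] ->.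
have p1_gt0 : 0 < p - 1 by rewrite subn_gt0 prime_gt1.
have Q_gt0 : 0 < Q by apply: leq_trans Q_gt7.
have m_gt0 : 0 < (p - 1) %/ Q by rewrite divn_gt0 // dvdn_leq.
rewrite mem_filter mem_iota pE // coprime210_prime_gt7 //; last first.
  by rewrite -(pE p) //; nia.
by rewrite m_gt0 add1n ltnS leq_div2r //; lia.
Qed.

Lemma logn_prod I (r : seq I) (P : pred I) (F : I -> nat) q :
  (forall i, P i -> 0 < F i) ->
  logn q (\prod_(i <- r | P i) F i) = \sum_(i <- r | P i) logn q (F i).
Proof.
move=> F_gt0; elim: r => [|i r IHr]; first by rewrite !big_nil logn1.
rewrite !big_cons; case: ifP => // Pi.
by rewrite lognM ?IHr ?F_gt0 // prodn_cond_gt0.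
Qed.

Lemma logn_sum_dvdn q n K : prime q -> 0 < n -> logn q n <= K ->
  logn q n = \sum_(k < K) (q ^ k.+1 %| n).
Proof.
move=> q_pr n_gt0 log_le.
under eq_bigr => k _ do rewrite pfactor_dvdn //.
by rewrite -big_mkcond /= -(big_ord_widen _ (fun=> 1) log_le) sum1_card card_ord.
Qed.

Lemma logn_le_trunc_log q n a : prime q -> 0 < n -> n <= a -> logn q n <= trunc_log q a.
Proof.
move=> q_pr n_gt0 n_le; apply: trunc_log_max; first exact: prime_gt1.
exact: leq_trans (dvdn_leq n_gt0 (pfactor_dvdnn q n)) n_le.
Qed.

Lemma logn_prod_pm1 q a : prime q ->
  logn q (prod_pm1 a) =
  \sum_(k < trunc_log q a) count (fun p => prime p && (q ^ k.+1 %| p - 1)) (iota 0 a.+1).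
Proof.
move=> q_pr; have pm1_gt0 p : prime p -> 0 < p - 1 by rewrite subn_gt0; apply: prime_gt1.
rewrite /prod_pm1 logn_prod // big_seq_cond.
rewrite (eq_bigr (fun p => \sum_(k < trunc_log q a) (q ^ k.+1 %| p - 1))); last first.
  move=> p /andP[p_in p_pr]; apply: logn_sum_dvdn; rewrite ?pm1_gt0 //.
  by apply: logn_le_trunc_log; rewrite ?pm1_gt0 //; move: p_in; rewrite mem_index_iota; lia.
rewrite -big_seq_cond exchange_big; apply: eq_bigr => k _.
by rewrite -sum1_count big_mkcondr.
Qed.

Lemma sum_divn_pow_le q K a : 0 < q -> (q - 1) * \sum_(k < K) a %/ q ^ k.+1 <= a.
Proof.
move=> q_gt0; elim: K a => [|K IHK] a; first by rewrite big_ord0 muln0.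
rewrite big_ord_recl expn1 mulnDr.
under eq_bigr => k _ do rewrite expnS divnMA.
apply: leq_trans (leq_add (leqnn _) (IHK (a %/ q))) _.
by rewrite -{2}[a %/ q]mul1n -mulnDl subnK // mulnC leq_divM.
Qed.

Lemma logn_prod_pm1_le q a : prime q -> 7 < q ->
  210 * (q - 1) * logn q (prod_pm1 a) <= 48 * a + 630 * (q - 1) * trunc_log q a.
Proof.
move=> q_pr q_gt7; set K := trunc_log q a.
have cop_q : coprime q 210 by apply: coprime210_prime_gt7.
have term_le k : 210 * count (fun p => prime p && (q ^ k.+1 %| p - 1)) (iota 0 a.+1)
                 <= 48 * (a %/ q ^ k.+1) + 630.
  have qk_gt7 : 7 < q ^ k.+1.
    by rewrite expnS (leq_trans q_gt7) ?leq_pmulr ?expn_gt0 ?prime_gt0.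
  apply: leq_trans (leq_mul (leqnn 210) (count_primes_1_mod_le _ _ qk_gt7)) _.
  apply: leq_trans (count_coprime_wheel_le _ _ (coprimeXl _ cop_q)) _.
  by rewrite leq_add2r leq_mul2l leq_div2r ?leq_subr ?orbT.
have sum_le : 210 * logn q (prod_pm1 a) <= 48 * \sum_(k < K) a %/ q ^ k.+1 + 630 * K.
  have -> : 630 * K = \sum_(k < K) 630 by rewrite sum_nat_const card_ord mulnC.
  rewrite logn_prod_pm1 // !big_distrr -big_split.
  by apply: leq_sum => k _; apply: term_le.
have := leq_mul (leqnn (q - 1)) sum_le.
have := sum_divn_pow_le q K a (prime_gt0 q_pr).
nia.
Qed.

(* Imported only now: Reals rebinds [^] on nat to [Nat.pow]. *)
From Stdlib Require Import Reals Lra.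

Lemma INR_expn m n : INR (expn m n) = (INR m ^ n)%R.
Proof. by elim: n => [|n IHn] //=; rewrite expnS mulnE mult_INR IHn. Qed.

Lemma trunc_log_le_ln_ratio q a : 1 < q -> 0 < a ->
  (INR (trunc_log q a) <= ln (INR a) / ln (INR q))%R.
Proof.
move=> q_gt1 a_gt0.
have q_gt1R : (1 < INR q)%R by apply/lt_1_INR/ltP.
have lnq_gt0 : (0 < ln (INR q))%R by rewrite -ln_1; apply: ln_increasing; lra.
have pow_le : (INR q ^ trunc_log q a <= INR a)%R.
  by rewrite -INR_expn; apply/le_INR/leP/trunc_logP.
apply: (Rmult_le_reg_r (ln (INR q))) => //.
rewrite /Rdiv Rmult_assoc Rinv_l; last lra.
rewrite Rmult_1_r -ln_pow; last lra.
case: (Rle_lt_or_eq_dec _ _ pow_le) => [pow_lt_a | ->]; last lra.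
by apply/Rlt_le/ln_increasing => //; apply: pow_lt; lra.
Qed.

Theorem lemma5p1 (q a : nat) (hq : prime q) (hq7 : 7 < q) (ha : 0 < a) :
  (INR (logn q (prod_pm1 a))
   <= (23 / 100) * INR a / INR (q - 1) + 7 * ln (INR a) / ln (INR q))%R.
Proof.
have main : (210 * INR (q - 1) * INR (logn q (prod_pm1 a))
              <= 48 * INR a + 630 * INR (q - 1) * INR (trunc_log q a))%R.
  have /le_INR := leP (logn_prod_pm1_le q a hq hq7).
  rewrite mulnE addnE plus_INR !mult_INR.
  by have [-> -> ->] : [/\ INR 210 = 210, INR 48 = 48 & INR 630 = 630]%R
    by split; rewrite INR_IZR_INZ.
have K_le := trunc_log_le_ln_ratio q a (prime_gt1 hq) ha.
have K_ge0 := pos_INR (trunc_log q a).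
have q1_gt0 : (0 < INR (q - 1))%R by apply/lt_0_INR/ltP; rewrite subn_gt0 prime_gt1.
have scaled : (210 * INR (logn q (prod_pm1 a))
               <= 48 * (INR a / INR (q - 1)) + 630 * INR (trunc_log q a))%R.
  apply: (Rmult_le_reg_l (INR (q - 1))) => //.
  have -> : (INR (q - 1) * (48 * (INR a / INR (q - 1)) + 630 * INR (trunc_log q a))
             = 48 * INR a + 630 * INR (q - 1) * INR (trunc_log q a))%R by field; lra.
  lra.
have ratio_ge0 : (0 <= INR a / INR (q - 1))%R.
  exact: Rmult_le_pos (pos_INR a) (Rlt_le _ _ (Rinv_0_lt_compat _ q1_gt0)).
lra.
Qed.
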